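(* Let $m,n\ge2$ be integers and let $H$ be the graph on the vertex set $\{x_{i,j}: i\in[m], j\in[n]\}$ with edge set $\{\{x_{i,j},x_{i',j+1}\}: 1\le i<i'\le m,\ 1\le j\le n-1\}$. Then \[\operatorname{match}(H)=(m-1)\left\lfloor\tfrac n2\right\rfloor+\left\lfloor\tfrac{n-1}2\right\rfloor.\]
   Context: $\operatorname{match}(H)$ is the maximum size of a matching (set of pairwise disjoint edges) in $H$. *)

From mathcomp Require Import all_boot.
Set Implicit Arguments. Unset Strict Implicit. Unset Printing Implicit Defensive.

(* A simple graph on a finite vertex type V is given by a relation e
   (assumed symmetric); its edges are the 2-sets {x,y} with e x y. *)
Definition is_edge (V : finType) (e : rel V) (A : {set V}) : bool :=
  [exists x, exists y, [&& x != y, e x y & A == [set x; y]]].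

Definition is_matching (V : finType) (e : rel V) (M : {set {set V}}) : bool :=
  [forall A in M, is_edge e A] && trivIset M.

Definition match_num (V : finType) (e : rel V) : nat :=
  \max_(M : {set {set V}} | is_matching e M) #|M|.

(* The graph H of the paper on vertices x_{i,j}, i in [m], j in [n]
   (0-based indices here): x_{i,j} ~ x_{i',j+1} whenever i < i'. *)
Definition Hadj (m n : nat) : rel ('I_m * 'I_n) :=
  fun u v =>
    ((u.1 < v.1) && (u.2.+1 == v.2)) || ((v.1 < u.1) && (v.2.+1 == u.2)).
Arguments Hadj : clear implicits.

From mathcomp Require Import all_boot zify.
Set Implicit Arguments. Unset Strict Implicit. Unset Printing Implicit Defensive.

(* Every edge of H joins two consecutive columns, exactly one of which is odd,
   so the vertices of the odd columns cover all edges; the vertex (0, n-1) can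
   even be dropped, since edges leave an odd column only before column n-1 and
   enter it only in rows > 0.  A matching is at most as large as a cover.
   Conversely, the edges (i, c) -- (i+1, c+1), i < m-1, for even c < n-1,
   together with the edges (0, c) -- (m-1, c+1) for odd c < n-1, are pairwise
   disjoint, and there are exactly as many of them as vertices in that cover
   (rows and columns are numbered from 0). *)

Section MatchingBounds.

Variables (V : finType) (e : rel V).

Lemma match_num_le_cover (T : {set V}) :
    (forall x y, x != y -> e x y -> (x \in T) || (y \in T)) ->
  match_num e <= #|T|.
Proof.
move=> coverT; apply/bigmax_leqP => M /andP[/forall_inP edgeM /trivIsetP disjM].
pose pickT A := [pick x in A :&: T].
have pickTP A : A \in M -> exists2 x, pickT A = Some x & x \in A :&: T.
  move=> /edgeM /existsP[x /existsP[y /and3P[xy exy /eqP defA]]].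
  have [z zAT] : exists z, z \in A :&: T.
    by case/orP: (coverT x y xy exy); [exists x | exists y]; rewrite defA !inE eqxx ?orbT.
  by rewrite /pickT; case: pickP => [u ?|/(_ z)]; [exists u | rewrite zAT].
have pickT_inj : {in M &, injective pickT}.
  move=> A B AM BM eqAB; apply/eqP; apply: contraT => /(disjM A B AM BM) dAB.
  have [x pAx xAT] := pickTP A AM; have [y pBy yBT] := pickTP B BM.
  have xy : x = y by apply: Some_inj; rewrite -pAx -pBy eqAB.
  case/setIP: xAT => xA _; case/setIP: yBT; rewrite -xy => xB _.
  by rewrite (disjointFr dAB xA) in xB.
rewrite -(card_in_imset pickT_inj) -(card_imset T (@Some_inj _)).
apply: subset_leq_card; apply/subsetP => _ /imsetP[A AM ->].
by have [x -> /setIP[_ xT]] := pickTP A AM; rewrite imset_f.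
Qed.

Lemma card_le_match_num (I : finType) (D : {set I}) (a b : I -> V) :
    {in D, forall d, a d != b d /\ e (a d) (b d)} ->
    {in D &, forall d d', d != d' -> [disjoint [set a d; b d] & [set a d'; b d']]} ->
  #|D| <= match_num e.
Proof.
move=> edgeD disjD; pose E d := [set a d; b d].
have E_inj : {in D &, injective E}.
  move=> d d' dD d'D eqE; apply/eqP; apply: contraT => /(disjD d d' dD d'D).
  by rewrite -/(E d) eqE => /disjointFr/(_ (set21 _ _)); rewrite set21.
rewrite -(card_in_imset E_inj); apply: leq_bigmax_cond; apply/andP; split.
  apply/forall_inP => _ /imsetP[d dD ->]; have [ab eab] := edgeD d dD.
  by apply/existsP; exists (a d); apply/existsP; exists (b d); rewrite ab eab eqxx.
apply/trivIsetP => _ _ /imsetP[d dD ->] /imsetP[d' d'D ->] neqE.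
by apply: disjD => //; apply: contraNneq neqE => ->.
Qed.

End MatchingBounds.

Lemma card_setX_dep (A B : finType) (S : B -> {set A}) :
  #|[set v : A * B | v.1 \in S v.2]| = \sum_(b : B) #|S b|.
Proof.
rewrite -sum1_card (partition_big snd predT) //=; apply: eq_bigr => b _.
rewrite -sum1_card (reindex (pair^~ b)) /=; last first.
  by exists fst => [a _ | [a b'] /andP[_ /eqP /= ->]].
by apply: eq_bigl => a; rewrite !inE eqxx andbT.
Qed.

Lemma sum_ord_parity k a b :
  \sum_(c < k) (if odd c then a else b) = k./2 * a + uphalf k * b.
Proof.
elim: k => [|k IHk]; first by rewrite big_ord0.
rewrite big_ord_recr /= IHk !uphalf_half /=; case: (odd k) => /=; lia.
Qed.

Lemma card_odd_ord k : #|[set c : 'I_k | odd c]| = k./2.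
Proof. by rewrite -sum1dep_card big_mkcond sum_ord_parity muln1 muln0 addn0. Qed.

Section Grid.

(* [m] and [n] are one less than in the theorem. *)
Variables m n : nat.

Local Notation V := ('I_m.+1 * 'I_n.+1)%type.
Local Notation H := (Hadj m.+1 n.+1).

Definition odd_cover : {set V} :=
  setX [set: 'I_m.+1] [set c : 'I_n.+1 | odd c] :\ (ord0, ord_max).

Lemma odd_cover_covers x y : H x y -> (x \in odd_cover) || (y \in odd_cover).
Proof.
suff cover (u v : V) : u.1 < v.1 -> u.2.+1 = v.2 ->
    (u \in odd_cover) || (v \in odd_cover).
  by case/orP=> /andP[lt /eqP succ]; [|rewrite orbC]; apply: cover.
case: u v => [i c] [i' c'] /= lt_ii' succ_cc'.
rewrite !inE !xpair_eqE -!val_eqE /=; have := ltn_ord c'; lia.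
Qed.

Lemma card_odd_cover : #|odd_cover| = m * uphalf n + n./2.
Proof.
pose odd_cols := setX [set: 'I_m.+1] [set c : 'I_n.+1 | odd c].
apply/(@addnI ((ord0, ord_max) \in odd_cols)); rewrite -cardsD1.
rewrite cardsX cardsT card_ord card_odd_ord !inE /= uphalf_half; lia.
Qed.

Definition diag_rows (c : 'I_n) : {set 'I_m.+1} :=
  if odd c then [set ord0] else [set~ ord_max].

Definition diag_index : {set 'I_m.+1 * 'I_n} := [set d | d.1 \in diag_rows d.2].

Definition diag_tail (d : 'I_m.+1 * 'I_n) : V :=
  (if odd d.2 then ord0 else d.1, widen_ord (leqnSn n) d.2).

Definition diag_head (d : 'I_m.+1 * 'I_n) : V :=
  (if odd d.2 then ord_max else inord d.1.+1, lift ord0 d.2).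

Lemma card_diag_index : #|diag_index| = m * uphalf n + n./2.
Proof.
rewrite card_setX_dep (eq_bigr (fun c : 'I_n => if odd c then 1 else m)) => [|c _].
  by rewrite sum_ord_parity addnC mulnC muln1.
by rewrite /diag_rows; case: odd; rewrite ?cards1 // cardsC1 card_ord.
Qed.

Hypothesis m_gt0 : 0 < m.

Lemma diag_coords i c : (i, c) \in diag_index ->
  let: (t, h) := (diag_tail (i, c), diag_head (i, c)) in
  t.2 = c :> nat /\ h.2 = c.+1 :> nat /\
  if odd c then i = 0 :> nat /\ t.1 = 0 :> nat /\ h.1 = m :> nat
  else i < m /\ t.1 = i :> nat /\ h.1 = i.+1 :> nat.
Proof.
rewrite inE /diag_rows /diag_tail /diag_head lift0; have i_le_m := ltn_ord i.
case: (odd c); rewrite !inE -val_eqE /= => row_i; rewrite ?inordK; lia.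
Qed.

Lemma diag_is_edge d : d \in diag_index ->
  diag_tail d != diag_head d /\ H (diag_tail d) (diag_head d).
Proof.
case: d => i c /diag_coords; move: (diag_tail _) (diag_head _) => [t1 t2] [h1 h2] /=.
rewrite /Hadj xpair_eqE -!val_eqE /=; case: (odd c); lia.
Qed.

Lemma diag_endpoint i c x : (i, c) \in diag_index ->
    x \in [set diag_tail (i, c); diag_head (i, c)] ->
  let: (r, k) := (nat_of_ord x.1, nat_of_ord x.2) in
  if odd c then i = 0 :> nat /\ (r = 0 /\ k = c \/ r = m /\ k = c.+1)
  else i < m /\ (r = i /\ k = c \/ r = i.+1 /\ k = c.+1).
Proof.
move/diag_coords; move: (diag_tail _) (diag_head _) => t h /= coords.
by rewrite !inE => /orP[]/eqP->; case: (odd c) coords => /=; lia.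
Qed.

Lemma diag_disjoint : {in diag_index &, forall d d', d != d' ->
  [disjoint [set diag_tail d; diag_head d] & [set diag_tail d'; diag_head d']]}.
Proof.
move=> [i c] [i' c'] dD d'D neq_dd'; rewrite -setI_eq0; apply/set0Pn => -[x /setIP[xd xd']].
move: neq_dd'; rewrite xpair_eqE -!val_eqE /=.
have := diag_endpoint dD xd; have := diag_endpoint d'D xd'.
case: (boolP (odd c)); case: (boolP (odd c')); lia.
Qed.

End Grid.

Theorem lemma4p1 (m n : nat) : 2 <= m -> 2 <= n ->
  match_num (Hadj m n) = (m - 1) * (n %/ 2) + (n - 1) %/ 2.
Proof.
case: m => [|m] // m_gt0; case: n => [|n] // _.
rewrite !subn1 !divn2 /=; apply/eqP; rewrite eqn_leq; apply/andP; split.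
- rewrite -(card_odd_cover m n); apply: match_num_le_cover => x y _.
  exact: odd_cover_covers.
- rewrite -(card_diag_index m n); apply: card_le_match_num.
  + exact: diag_is_edge.
  + exact: diag_disjoint.
Qed.
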